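(* If $\varepsilon$ is sufficiently small (depending only on $g$), then $|\phi|\lesssim\sqrt{\varepsilon}$ on $\mathcal{D}$, with implicit constant depending only on $g$.
   Context: Target $d\rho^2+g(\rho)^2d\theta^2$ with $g$ smooth, odd, $g'(0)=1$, $\int_0^s g\to\infty$ as $s\to\infty$, satisfying the Grillakis condition $sg'(s)+g(s)>0$ for $s>0$; $f=gg'$; $\kappa>0$. In null coordinates $(u,\underline{u})$ with $\mathbf{g}=-\Omega^2du\,d\underline{u}+r^2d\theta^2$, normalized on the axis $\{u=\underline{u}\}$ by $r=0$, $\partial_{\underline{u}}r=1/2$, $\partial_ur=-1/2$, $\Omega=1$, the system reads: $\partial_u(\Omega^{-2}\partial_ur)=-\kappa\Omega^{-2}r(\partial_u\phi)^2$, $\partial_{\underline{u}}(\Omega^{-2}\partial_{\underline{u}}r)=-\kappa\Omega^{-2}r(\partial_{\underline{u}}\phi)^2$, $\partial_u\partial_{\underline{u}}r=\kappa\Omega^2g(\phi)^2/(4r)$, $\Omega^{-2}(\partial_u\Omega\,\partial_{\underline{u}}\Omega-\Omega\partial_u\partial_{\underline{u}}\Omega)=\tfrac{\kappa}{8}\big(4\partial_u\phi\,\partial_{\underline{u}}\phi+\Omega^2g(\phi)^2/r^2\big)$, $\partial_u(r\partial_{\underline{u}}\phi)+\partial_{\underline{u}}(r\partial_u\phi)=-\Omega^2f(\phi)/(2r)$. Let $\tau=(u+\underline{u})/2$, $\varrho=(\underline{u}-u)/2$ and $\mathcal{D}=\{-1\le\tau<0,\ \underline{u}\le0,\ u\le\underline{u}\}$;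 the solution is regular on $\mathcal{D}$, $\phi=0$ on the axis. Flux smallness conditions: (F1) for every $\underline{u}\in[-1,0]$, $\int_{-2-\underline{u}}^{\underline{u}}\big((\partial_u\phi)^2+g(\phi)^2/r^2\big)r\,(u',\underline{u})\,du'\le\varepsilon$; (F2) for every $u\in[-2,0]$, $\int_{\max(u,-2-u)}^{0}\big((\partial_{\underline{u}}\phi)^2+g(\phi)^2/r^2\big)r\,(u,\underline{u}')\,d\underline{u}'\le\varepsilon$; both are assumed. *)

From Stdlib Require Import Reals.
Open Scope R_scope.

Definition du (F : R -> R -> R) (u ub val : R) : Prop :=
  derivable_pt_lim (fun x => F x ub) u val.

Definition dub (F : R -> R -> R) (u ub val : R) : Prop :=
  derivable_pt_lim (fun y => F u y) ub val.

Definition cont2 (F : R -> R -> R) (u ub : R) : Prop :=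
  forall e, 0 < e -> exists d, 0 < d /\
    forall x y, Rabs (x - u) < d -> Rabs (y - ub) < d ->
      Rabs (F x y - F u ub) < e.

Definition C2_on (S : R -> R -> Prop) (F Fu Fv Fuu Fuv Fvv : R -> R -> R) : Prop :=
  forall u v, S u v ->
    du F u v (Fu u v) /\ dub F u v (Fv u v) /\
    du Fu u v (Fuu u v) /\ dub Fu u v (Fuv u v) /\
    du Fv u v (Fuv u v) /\ dub Fv u v (Fvv u v) /\
    cont2 F u v /\ cont2 Fu u v /\ cont2 Fv u v /\
    cont2 Fuu u v /\ cont2 Fuv u v /\ cont2 Fvv u v.

Definition smooth1 (g : R -> R) : Prop :=
  exists D : nat -> R -> R, D O = g /\
    forall n s, derivable_pt_lim (D n) s (D (S n) s).

(* the region D = { -1 <= tau < 0, ub <= 0, u <= ub },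
   tau = (u+ub)/2 *)
Definition inD (u ub : R) : Prop :=
  -1 <= (u + ub) / 2 /\ (u + ub) / 2 < 0 /\ ub <= 0 /\ u <= ub.

Definition target_ok (g g' : R -> R) : Prop :=
  smooth1 g /\
  (forall s, derivable_pt_lim g s (g' s)) /\
  (forall s, g (- s) = - g s) /\
  g' 0 = 1 /\
  (* int_0^s g -> infinity as s -> infinity, via the primitive G(s) = int_0^s g *)
  (exists G : R -> R, G 0 = 0 /\ (forall s, derivable_pt_lim G s (g s)) /\
     forall M, exists S0, forall s, S0 <= s -> M <= G s) /\
  (forall s, 0 < s -> s * g' s + g s > 0).

From Stdlib Require Import Reals Lra.
From Coquelicot Require Import Coquelicot.
Open Scope R_scope.

(* Along the outgoing null line through a point with ub < 0, starting on the
   axis where phi = 0, the fundamental theorem of calculus and the AM-GM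
   inequality 2 |g(phi) phi_u| <= (phi_u^2 + g(phi)^2 / r^2) r give
   2 |G(phi)| <= flux <= eps, where G is the primitive of g vanishing at 0.
   The Grillakis condition makes s g(s) increasing, so g(s) >= a s on [0,1]
   and G is even with G(s) >= a s^2 / 2 on [0,1]; for eps <= a/2 this forces
   |phi| <= sqrt(eps / a).  The points with ub = 0 follow by continuity. *)

Section Target.
Variables g g' : R -> R.
Hypothesis g_deriv : forall s, derivable_pt_lim g s (g' s).
Hypothesis g_odd : forall s, g (- s) = - g s.
Hypothesis g'_0 : g' 0 = 1.
Hypothesis grillakis : forall s, 0 < s -> s * g' s + g s > 0.

Lemma g_0 : g 0 = 0.
Proof. assert (H := g_odd 0). rewrite Ropp_0 in H. lra. Qed.

Lemma mul_g_increasing d s : 0 <= d -> d < s -> d * g d < s * g s.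
Proof.
  intros Hd Hds.
  destruct (MVT_cor2 (fun x => x * g x) (fun x => g x + x * g' x) d s Hds)
    as [c [Hc Hcds]].
  { intros c _. replace (g c + c * g' c) with (1 * g c + c * g' c) by ring.
    exact (derivable_pt_lim_mult id g c 1 (g' c) (derivable_pt_lim_id c) (g_deriv c)). }
  assert (0 < g c + c * g' c) by (specialize (grillakis c); lra).
  assert (0 < (g c + c * g' c) * (s - d)) by (apply Rmult_lt_0_compat; lra).
  lra.
Qed.

Lemma g_pos s : 0 < s -> 0 < g s.
Proof.
  intros Hs. assert (H := mul_g_increasing 0 s (Rle_refl 0) Hs).
  rewrite g_0, Rmult_0_l in H. nra.
Qed.

Lemma g_ge_half_near_0 : exists d, 0 < d <= 1 /\ forall s, 0 <= s <= d -> s / 2 <= g s.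
Proof.
  destruct (g_deriv 0 (1 / 2) ltac:(lra)) as [[del Hdel] Hnear]; simpl in Hnear.
  exists (Rmin (del / 2) 1). split.
  { split; [apply Rmin_glb_lt; lra | apply Rmin_r]. }
  intros s Hs. destruct (Req_dec s 0) as [->|Hs0]; [rewrite g_0; lra|].
  assert (Hsdel : Rabs s < del).
  { rewrite Rabs_right by lra. assert (Rmin (del / 2) 1 <= del / 2) by apply Rmin_l. lra. }
  specialize (Hnear s Hs0 Hsdel). rewrite Rplus_0_l, g_0, g'_0, Rminus_0_r in Hnear.
  destruct (Rabs_def2 _ _ Hnear) as [_ Hlow].
  assert (Hq : 1 / 2 * s < g s / s * s) by (apply Rmult_lt_compat_r; lra).
  replace (g s / s * s) with (g s) in Hq by (field; lra). lra.
Qed.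

Lemma g_ge_linear : exists a, 0 < a /\ forall s, 0 <= s <= 1 -> a * s <= g s.
Proof.
  destruct g_ge_half_near_0 as [d [Hd Hnear]].
  exists (d * d / 2). split; [nra|]. intros s Hs.
  destruct (Rle_lt_dec s d) as [Hsd|Hds].
  - specialize (Hnear s ltac:(lra)). assert (d * d <= 1) by nra. nra.
  - assert (Hdd := Hnear d ltac:(lra)).
    assert (Hinc := mul_g_increasing d s ltac:(lra) Hds).
    assert (0 < g s) by (apply g_pos; lra).
    nra.
Qed.

Section Primitive.
Variable G : R -> R.
Hypothesis G_0 : G 0 = 0.
Hypothesis G_deriv : forall s, derivable_pt_lim G s (g s).

Lemma G_even s : G (- s) = G s.
Proof.
  assert (Hconst : forall x, derivable_pt_lim (fun x => G x - G (- x)) x 0).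
  { intro x. replace 0 with (g x - g (- x) * (-1)) by (rewrite g_odd; ring).
    apply derivable_pt_lim_minus; [apply G_deriv|].
    apply (derivable_pt_lim_comp (fun x => - x) G x (-1) (g (- x))); [|apply G_deriv].
    replace (-1) with (- (1)) by ring. apply derivable_pt_lim_opp, derivable_pt_lim_id. }
  destruct (Rtotal_order s 0) as [Hs|[->|Hs]].
  - destruct (MVT_cor2 _ _ s 0 Hs (fun c _ => Hconst c)) as [c [Hc _]].
    rewrite Ropp_0 in Hc. lra.
  - now rewrite Ropp_0.
  - destruct (MVT_cor2 _ _ 0 s Hs (fun c _ => Hconst c)) as [c [Hc _]].
    rewrite Ropp_0 in Hc. lra.
Qed.

Lemma G_nondecreasing_nonneg x y : 0 <= x -> x <= y -> G x <= G y.
Proof.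
  intros Hx Hxy. destruct (Req_dec x y) as [->|Hne]; [lra|].
  destruct (MVT_cor2 G g x y ltac:(lra) (fun c _ => G_deriv c)) as [c [Hc Hcxy]].
  assert (0 < g c * (y - x)) by (apply Rmult_lt_0_compat; [apply g_pos|]; lra).
  lra.
Qed.

Lemma G_ge_quadratic a : (forall s, 0 <= s <= 1 -> a * s <= g s) ->
  forall s, 0 <= s <= 1 -> a * s * s / 2 <= G s.
Proof.
  intros Hlin s Hs. destruct (Req_dec s 0) as [->|Hs0]; [rewrite G_0; lra|].
  destruct (MVT_cor2 (fun x => G x - a / 2 * (x * x))
              (fun x => g x - a / 2 * (1 * x + x * 1)) 0 s ltac:(lra)) as [c [Hc Hcs]].
  { intros c _. apply derivable_pt_lim_minus; [apply G_deriv|].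
    apply derivable_pt_lim_scal, (derivable_pt_lim_mult id id);
      apply derivable_pt_lim_id. }
  rewrite G_0 in Hc. specialize (Hlin c ltac:(lra)).
  assert (0 <= (g c - a / 2 * (1 * c + c * 1)) * (s - 0)) by (apply Rmult_le_pos; lra).
  lra.
Qed.

Lemma Rabs_le_of_G_le a p e : 0 < a -> (forall s, 0 <= s <= 1 -> a * s <= g s) ->
  e <= a / 2 -> 2 * G p <= e -> Rabs p <= sqrt (/ a) * sqrt e.
Proof.
  intros Ha Hlin Hea Hp.
  assert (HGabs : G (Rabs p) = G p).
  { unfold Rabs. destruct (Rcase_abs p); [apply G_even | reflexivity]. }
  assert (Habs1 : Rabs p <= 1).
  { destruct (Rle_lt_dec (Rabs p) 1) as [|Hgt]; [assumption|].
    assert (G 1 <= G (Rabs p)) by (apply G_nondecreasing_nonneg; lra).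
    assert (a * 1 * 1 / 2 <= G 1) by (apply (G_ge_quadratic a Hlin); lra).
    lra. }
  assert (a * Rabs p * Rabs p / 2 <= G (Rabs p))
    by (apply (G_ge_quadratic a Hlin); split; [apply Rabs_pos | exact Habs1]).
  assert (Hsq : Rabs p * Rabs p <= / a * e).
  { apply Rmult_le_reg_l with a; [lra|].
    replace (a * (/ a * e)) with e by (field; lra). nra. }
  rewrite <- sqrt_mult_alt by (left; apply Rinv_0_lt_compat, Ha).
  rewrite <- (sqrt_square (Rabs p)) by apply Rabs_pos.
  now apply sqrt_le_1_alt.
Qed.

End Primitive.
End Target.

Lemma Rabs_sub_le_RInt (h h' F : R -> R) a b : a <= b ->
  (forall x, a <= x <= b -> derivable_pt_lim h x (h' x)) ->
  (forall x, a <= x <= b -> continuity_pt h' x) ->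
  ex_RInt F a b -> (forall x, a < x < b -> Rabs (h' x) <= F x) ->
  Rabs (h b - h a) <= RInt F a b.
Proof.
  intros Hab Hder Hcont HF Hle.
  assert (Hcont' : forall x, Rmin a b <= x <= Rmax a b -> continuous h' x).
  { intros x Hx. rewrite Rmin_left, Rmax_right in Hx by lra.
    now apply continuity_pt_filterlim, Hcont. }
  assert (Hftc : RInt h' a b = h b - h a).
  { apply (is_RInt_unique (V := R_CompleteNormedModule)).
    apply (is_RInt_derive (V := R_CompleteNormedModule) h); [|exact Hcont'].
    intros x Hx. rewrite Rmin_left, Rmax_right in Hx by lra. now apply is_derive_Reals, Hder. }
  assert (Hh' : ex_RInt h' a b) by now apply (ex_RInt_continuous (V := R_CompleteNormedModule)).
  rewrite <- Hftc.
  eapply Rle_trans; [now apply abs_RInt_le|].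
  apply RInt_le; [exact Hab | now apply (ex_RInt_norm h') | exact HF | exact Hle].
Qed.

Lemma RInt_le_of_subinterval (F : R -> R) a c b : a <= c <= b -> ex_RInt F a b ->
  (forall x, a < x < b -> 0 <= F x) -> RInt F c b <= RInt F a b.
Proof.
  intros Hacb HF Hpos.
  assert (Hac : ex_RInt F a c) by now apply (ex_RInt_Chasles_1 (V := R_CompleteNormedModule)) with b.
  assert (Hcb : ex_RInt F c b) by now apply (ex_RInt_Chasles_2 (V := R_CompleteNormedModule)) with a.
  rewrite <- (RInt_Chasles (V := R_CompleteNormedModule) F a c b Hac Hcb).
  assert (0 <= RInt F a c) by (apply RInt_ge_0; [lra | exact Hac | intros x Hx; apply Hpos; lra]).
  simpl. unfold plus; simpl. lra.
Qed.

Lemma two_mul_Rabs_le_energy A q r : 0 < r ->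
  2 * Rabs (A * q) <= (q ^ 2 + A ^ 2 / r ^ 2) * r.
Proof.
  intros Hr. rewrite Rabs_mult, <- (pow2_abs q), <- (pow2_abs A).
  set (x := Rabs A). set (y := Rabs q).
  apply Rmult_le_reg_l with r; [lra|].
  replace (r * ((y ^ 2 + x ^ 2 / r ^ 2) * r)) with ((y * r) ^ 2 + x ^ 2) by (field; lra).
  assert (0 <= (y * r - x) ^ 2) by apply pow2_ge_0. nra.
Qed.

Section Energy.
Variables g g' G : R -> R.
Hypothesis g_deriv : forall s, derivable_pt_lim g s (g' s).
Hypothesis G_0 : G 0 = 0.
Hypothesis G_deriv : forall s, derivable_pt_lim G s (g s).

Definition energy (p p' rho : R -> R) x := (p' x ^ 2 + g (p x) ^ 2 / rho x ^ 2) * rho x.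

Lemma primitive_variation_le_energy (p p' rho : R -> R) a b : a <= b ->
  (forall x, a <= x <= b -> derivable_pt_lim p x (p' x)) ->
  (forall x, a <= x <= b -> continuity_pt p' x) ->
  (forall x, a < x < b -> 0 < rho x) ->
  ex_RInt (energy p p' rho) a b ->
  2 * Rabs (G (p b) - G (p a)) <= RInt (energy p p' rho) a b.
Proof.
  intros Hab Hp Hp' Hrho Hint.
  replace (2 * Rabs (G (p b) - G (p a))) with (Rabs (2 * G (p b) - 2 * G (p a)))
    by (rewrite <- Rmult_minus_distr_l, Rabs_mult, Rabs_right; lra).
  apply Rabs_sub_le_RInt with (h := fun x => 2 * G (p x)) (h' := fun x => 2 * (g (p x) * p' x)); auto.
  - intros x Hx. apply derivable_pt_lim_scal.
    exact (derivable_pt_lim_comp p G x _ _ (Hp x Hx) (G_deriv _)).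
  - intros x Hx. apply continuity_pt_mult; [apply continuity_pt_const; now intros ? ?|].
    apply continuity_pt_mult; [|exact (Hp' x Hx)].
    apply (continuity_pt_comp p g x).
    + apply derivable_continuous_pt. exists (p' x). exact (Hp x Hx).
    + apply derivable_continuous_pt. exists (g' (p x)). apply g_deriv.
  - intros x Hx. rewrite Rabs_mult, (Rabs_right 2) by lra.
    apply two_mul_Rabs_le_energy, Hrho, Hx.
Qed.

Lemma primitive_le_flux (p p' rho : R -> R) a c b eps : a <= c <= b ->
  (forall x, a <= x <= b -> derivable_pt_lim p x (p' x)) ->
  (forall x, a <= x <= b -> continuity_pt p' x) ->
  (forall x, a < x < b -> 0 < rho x) ->
  p b = 0 ->
  (exists pr : Riemann_integrable (energy p p' rho) a b, RiemannInt pr <= eps) ->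
  2 * G (p c) <= eps.
Proof.
  intros Hacb Hp Hp' Hrho Hpb [pr Hflux].
  assert (Hint : ex_RInt (energy p p' rho) a b) by now apply ex_RInt_Reals_1.
  assert (Hpos : forall x, a < x < b -> 0 <= energy p p' rho x).
  { intros x Hx. assert (Hr := two_mul_Rabs_le_energy (g (p x)) (p' x) (rho x) (Hrho x Hx)).
    assert (0 <= Rabs (g (p x) * p' x)) by apply Rabs_pos. unfold energy. lra. }
  assert (Hvar := primitive_variation_le_energy p p' rho c b ltac:(lra)
                    ltac:(intros x Hx; apply Hp; lra) ltac:(intros x Hx; apply Hp'; lra)
                    ltac:(intros x Hx; apply Hrho; lra)
                    ltac:(now apply (ex_RInt_Chasles_2 (V := R_CompleteNormedModule)) with a)).
  assert (Hsub := RInt_le_of_subinterval _ a c b Hacb Hint Hpos).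
  rewrite (RInt_Reals _ _ _ pr) in Hsub.
  rewrite Hpb, G_0, Rminus_0_l, Rabs_Ropp in Hvar.
  assert (Hle := Rle_abs (G (p c))). lra.
Qed.

End Energy.

Lemma C2_on_du_continuity S F Fu Fv Fuu Fuv Fvv u v :
  C2_on S F Fu Fv Fuu Fuv Fvv -> S u v ->
  du F u v (Fu u v) /\ continuity_pt (fun x => Fu x v) u.
Proof.
  intros HC Huv. destruct (HC u v Huv) as [Hdu [_ [_ [_ [_ [_ [_ [Hcont _]]]]]]]].
  split; [exact Hdu|].
  intros e He. destruct (Hcont e He) as [d [Hd Hball]].
  exists d. split; [exact Hd|]. intros x [_ Hx]. simpl in *. unfold R_dist in *.
  apply Hball; [exact Hx | rewrite Rminus_eq_0, Rabs_R0; exact Hd].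
Qed.

Lemma Rabs_le_of_cont2_approx F u v M : cont2 F u v ->
  (forall d, 0 < d -> exists x y,
     Rabs (x - u) < d /\ Rabs (y - v) < d /\ Rabs (F x y) <= M) ->
  Rabs (F u v) <= M.
Proof.
  intros Hcont Happrox.
  destruct (Rle_lt_dec (Rabs (F u v)) M) as [|Hgt]; [assumption|].
  destruct (Hcont (Rabs (F u v) - M) ltac:(lra)) as [d [Hd Hball]].
  destruct (Happrox d Hd) as [x [y [Hx [Hy HM]]]].
  assert (Hclose := Hball x y Hx Hy).
  assert (Htri := Rabs_triang_inv (F u v) (F u v - F x y)).
  replace (F u v - (F u v - F x y)) with (F x y) in Htri by ring.
  rewrite Rabs_minus_sym in Htri. lra.
Qed.

Lemma inD_approx_from_interior u d : inD u 0 -> 0 < d ->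
  exists x y, Rabs (x - u) < d /\ Rabs (y - 0) < d /\ inD x y /\ y < 0.
Proof.
  unfold inD. intros Hu Hd.
  set (t := Rmin (d / 2) (- u / 2)).
  assert (t_pos : 0 < t) by (apply Rmin_glb_lt; lra).
  assert (Ht : t <= d / 2 /\ t <= - u / 2) by (split; [apply Rmin_l | apply Rmin_r]).
  exists (u + t), (- t / 2). repeat split; try lra.
  - rewrite Rabs_right; lra.
  - rewrite Rabs_left; lra.
Qed.

Theorem mainTheorem13 :
  forall (g g' : R -> R), target_ok g g' ->
  forall (kappa : R), 0 < kappa ->
  exists (eps0 C : R), 0 < eps0 /\ 0 < C /\
  forall (r r_u r_ub r_uu r_uub r_ubub
          Om Om_u Om_ub Om_uu Om_uub Om_ubub
          phi phi_u phi_ub phi_uu phi_uub phi_ubub : R -> R -> R)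
         (eps : R),
    0 < eps -> eps <= eps0 ->
    C2_on inD r r_u r_ub r_uu r_uub r_ubub ->
    C2_on inD Om Om_u Om_ub Om_uu Om_uub Om_ubub ->
    C2_on inD phi phi_u phi_ub phi_uu phi_uub phi_ubub ->
    (forall u ub, inD u ub -> 0 < Om u ub) ->
    (forall u ub, inD u ub -> u < ub -> 0 < r u ub) ->
    (forall u, inD u u ->
       r u u = 0 /\ r_ub u u = 1 / 2 /\ r_u u u = - (1 / 2) /\
       Om u u = 1 /\ phi u u = 0) ->
    (forall u ub, inD u ub ->
       du (fun x y => / (Om x y ^ 2) * r_u x y) u ub
          (- kappa * / (Om u ub ^ 2) * r u ub * (phi_u u ub) ^ 2)) ->
    (forall u ub, inD u ub ->
       dub (fun x y => / (Om x y ^ 2) * r_ub x y) u ub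
          (- kappa * / (Om u ub ^ 2) * r u ub * (phi_ub u ub) ^ 2)) ->
    (forall u ub, inD u ub -> u < ub ->
       r_uub u ub = kappa * Om u ub ^ 2 * (g (phi u ub)) ^ 2 / (4 * r u ub)) ->
    (forall u ub, inD u ub -> u < ub ->
       / (Om u ub ^ 2) * (Om_u u ub * Om_ub u ub - Om u ub * Om_uub u ub)
       = kappa / 8 * (4 * phi_u u ub * phi_ub u ub
                      + Om u ub ^ 2 * (g (phi u ub)) ^ 2 / (r u ub ^ 2))) ->
    (forall u ub, inD u ub -> u < ub ->
       exists a b,
         du (fun x y => r x y * phi_ub x y) u ub a /\
         dub (fun x y => r x y * phi_u x y) u ub b /\
         a + b = - (Om u ub ^ 2 * (g (phi u ub) * g' (phi u ub))) / (2 * r u ub)) ->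
    (forall ub, -1 <= ub <= 0 ->
       forall c, -2 - ub <= c <= ub -> c + ub < 0 ->
       exists pr : Riemann_integrable
         (fun x => ((phi_u x ub) ^ 2 + (g (phi x ub)) ^ 2 / (r x ub) ^ 2) * r x ub)
         (-2 - ub) c,
       RiemannInt pr <= eps) ->
    (forall u, -2 <= u <= 0 ->
       exists pr : Riemann_integrable
         (fun y => ((phi_ub u y) ^ 2 + (g (phi u y)) ^ 2 / (r u y) ^ 2) * r u y)
         (Rmax u (-2 - u)) 0,
       RiemannInt pr <= eps) ->
    forall u ub, inD u ub -> Rabs (phi u ub) <= C * sqrt eps.
Proof.
  intros g g' [_ [g_deriv [g_odd [g'_0 [[G [G_0 [G_deriv _]]] grillakis]]]]] kappa _.
  destruct (g_ge_linear g g' g_deriv g_odd g'_0 grillakis) as [a [Ha Hlin]].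
  exists (a / 2), (sqrt (/ a)). split; [lra|].
  split; [apply sqrt_lt_R0, Rinv_0_lt_compat, Ha|].
  intros r r_u r_ub r_uu r_uub r_ubub Om Om_u Om_ub Om_uu Om_uub Om_ubub
    phi phi_u phi_ub phi_uu phi_uub phi_ubub eps Heps Heps0 _ _ Cphi _ Hr Haxis
    _ _ _ _ _ flux1 _.
  assert (Hinterior : forall u ub, inD u ub -> ub < 0 ->
            Rabs (phi u ub) <= sqrt (/ a) * sqrt eps).
  { intros u ub Huub Hub. unfold inD in Huub.
    assert (Hslice : forall x, -2 - ub <= x <= ub -> inD x ub) by (intros x Hx; unfold inD; lra).
    apply (Rabs_le_of_G_le g g' g_deriv g_odd grillakis G G_0 G_deriv a _ eps Ha Hlin Heps0).
    apply (primitive_le_flux g g' G g_deriv G_0 G_deriv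
             (fun x => phi x ub) (fun x => phi_u x ub) (fun x => r x ub) (-2 - ub) u ub eps);
      try lra.
    - intros x Hx. exact (proj1 (C2_on_du_continuity _ _ _ _ _ _ _ _ _ Cphi (Hslice x Hx))).
    - intros x Hx. exact (proj2 (C2_on_du_continuity _ _ _ _ _ _ _ _ _ Cphi (Hslice x Hx))).
    - intros x Hx. apply Hr; [apply Hslice|]; lra.
    - destruct (Haxis ub (Hslice ub ltac:(lra))) as [_ [_ [_ [_ Hphi]]]]. exact Hphi.
    - apply flux1; lra. }
  intros u ub Huub. destruct (Rlt_le_dec ub 0) as [Hub|Hub]; [now apply Hinterior|].
  assert (ub = 0) as -> by (unfold inD in Huub; lra).
  destruct (Cphi u 0 Huub) as [_ [_ [_ [_ [_ [_ [Hcont _]]]]]]].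
  apply (Rabs_le_of_cont2_approx _ _ _ _ Hcont). intros d Hd.
  destruct (inD_approx_from_interior u d Huub Hd) as [x [y [Hx [Hy [Hxy Hy0]]]]].
  exists x, y. split; [exact Hx | split; [exact Hy | now apply Hinterior]].
Qed.
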